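(* Let $e,d,t$ be positive integers with $\gcd(e,d)=1$. Suppose $S=\langle e,e+d,e+2d,\dots,e+td\rangle$ is a numerical semigroup whose minimal generating set is $\{e,e+d,\dots,e+td\}$. Then ${\rm d}_{\max}(S)$ equals the number of integer partitions of $e-1$ into parts from $\{1,2,\dots,t\}$.
   Context: A numerical semigroup is a submonoid of $(\mathbb N,+)$ with finite complement. For $S$ with minimal generators $a_0<a_1<\dots<a_t$, an $S$-factorization of $n\in S$ is $(c_0,\dots,c_t)\in\mathbb N^{t+1}$ with $\sum c_ia_i=n$, of length $\sum c_i$. ${\rm ord}(n;S)$ is the maximal length, ${\rm d}_{\max}(n;S)$ is the number of $S$-factorizations of $n$ of length ${\rm ord}(n;S)$, and ${\rm d}_{\max}(S)=\max_{n\in S}{\rm d}_{\max}(n;S)$. *)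

From mathcomp Require Import all_boot.
Set Implicit Arguments. Unset Strict Implicit. Unset Printing Implicit Defensive.

Definition in_semigroup (A : seq nat) (n : nat) : Prop :=
  exists c : 'I_(size A) -> nat, \sum_(i < size A) c i * nth 0 A i = n.

Definition numerical (A : seq nat) : Prop :=
  exists F, forall n, F <= n -> in_semigroup A n.

Definition minimal_gens (A : seq nat) : Prop :=
  uniq A /\
  forall i : 'I_(size A),
    ~ exists c : 'I_(size A) -> nat,
        c i = 0 /\ \sum_(j < size A) c j * nth 0 A j = nth 0 A i.

(* A-factorizations of n.  Each coordinate c_i satisfies c_i <= n whenever the
   generators are positive, so they are encoded with values in 'I_n.+1. *)
Definition factorizations (A : seq nat) (n : nat)
  : {set {ffun 'I_(size A) -> 'I_n.+1}} :=
  [set c : {ffun 'I_(size A) -> 'I_n.+1} | \sum_(i < size A) (c i : nat) * nth 0 A i == n].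

Definition flength (A : seq nat) (n : nat) (c : {ffun 'I_(size A) -> 'I_n.+1}) : nat :=
  \sum_(i < size A) (c i : nat).

Definition ord (A : seq nat) (n : nat) : nat :=
  \max_(c in factorizations A n) flength c.

Definition dmax_n (A : seq nat) (n : nat) : nat :=
  #|[set c in factorizations A n | flength c == ord A n]|.

Definition dmax_is (A : seq nat) (m : nat) : Prop :=
  (exists n, in_semigroup A n /\ dmax_n A n = m) /\
  (forall n, in_semigroup A n -> dmax_n A n <= m).

(* Number of integer partitions of N into parts from {1,...,t}, counted via
   multiplicity vectors (mult j = multiplicity of the part j+1); each
   multiplicity is at most N, hence encoded in 'I_N.+1. *)
Definition num_partitions_parts_le (N t : nat) : nat :=
  #|[set mult : {ffun 'I_t -> 'I_N.+1} |
       \sum_(j < t) j.+1 * (mult j : nat) == N]|.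

Definition arith_gens (e d t : nat) : seq nat :=
  [seq e + i * d | i <- iota 0 t.+1].

From mathcomp Require Import all_boot zify.
Set Implicit Arguments. Unset Strict Implicit. Unset Printing Implicit Defensive.

(* A factorization c of n has value n = L e + d w, where L is its length and
   w = sum_i i c_i is its weight, 0 <= w <= t L; every such pair (L, w) occurs.
   A factorization of maximal length has w < e, since otherwise (L + d, w - e)
   is longer.  All maximal factorizations of n share L and w, so sending c to
   the partition of w with multiplicities (c_1, ..., c_t), padded by e - 1 - w
   parts equal to 1, is an injection into the partitions of e - 1 with parts
   at most t.  For n = (e - 1)(e + d), coprimality of e and d forces the
   maximal length to be e - 1 and w = e - 1, and the injection is onto. *)

Lemma leq_sum_term m (F : 'I_m -> nat) i : F i <= \sum_j F j.
Proof. by rewrite (bigD1 i) //= leq_addr. Qed.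

Lemma sum_mul_indicator (I : finType) (F : I -> nat) k : \sum_i F i * (i == k) = F k.
Proof.
rewrite (bigD1 k) //= eqxx muln1 big1 ?addn0 // => i /negbTE ->.
by rewrite muln0.
Qed.

Lemma exists_len_weight t L w : w <= t * L ->
  exists F : 'I_t.+1 -> nat, \sum_i F i = L /\ \sum_(i < t.+1) i * F i = w.
Proof.
elim: L w => [|L IH] w hw.
  exists (fun _ => 0); split; first by rewrite big1.
  by rewrite big1 ?muln0 //; lia.
have ltk : minn w t < t.+1 by lia.
pose k := Ordinal ltk.
have [F [lenF wtF]] := IH (w - minn w t) ltac:(lia).
exists (fun i => F i + (i == k)); split.
  by rewrite big_split /= lenF (eq_bigr (fun i => 1 * (i == k))) ?sum_mul_indicator //; lia.
rewrite (eq_bigr (fun i : 'I_t.+1 => i * F i + i * (i == k))) => [|i _]; last first.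
  by rewrite mulnDr.
by rewrite big_split /= wtF sum_mul_indicator /=; lia.
Qed.

Definition inord_ffun n m (F : 'I_m -> nat) : {ffun 'I_m -> 'I_n.+1} :=
  [ffun i => inord (F i)].

Lemma inord_ffunE n m (F : 'I_m -> nat) i :
  (forall j, F j <= n) -> (inord_ffun n F i : nat) = F i.
Proof. by move=> leFn; rewrite ffunE inordK // ltnS. Qed.

Lemma coprime_len_bound e d L W : 0 < e -> coprime e d ->
  L * e + d * W = e.-1 * e + d * e.-1 -> L <= e.-1.
Proof.
move=> e_gt0 co_ed value; rewrite leqNgt; apply/negP => ltL.
have ltW : W < e.-1 by rewrite ltnNge; apply/negP => leW; nia.
have exchange : (L - e.-1) * e = (e.-1 - W) * d by nia.
have : e %| e.-1 - W by rewrite -(Gauss_dvdl _ co_ed) -exchange dvdn_mull.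
by move/dvdn_leq; lia.
Qed.

Definition partitions N t : {set {ffun 'I_t -> 'I_N.+1}} :=
  [set m : {ffun 'I_t -> 'I_N.+1} | \sum_(j < t) j.+1 * (m j : nat) == N].

Section ArithmeticGenerators.

Variables (e d t : nat) (g : nat -> nat).
Hypotheses (e_gt0 : 0 < e) (d_gt0 : 0 < d) (t_gt0 : 0 < t) (co_ed : coprime e d).
Hypothesis gE : forall i : 'I_t.+1, g i = e + i * d.

Definition facts n : {set {ffun 'I_t.+1 -> 'I_n.+1}} :=
  [set c : {ffun 'I_t.+1 -> 'I_n.+1} | \sum_i (c i : nat) * g i == n].
Definition len n (c : {ffun 'I_t.+1 -> 'I_n.+1}) := \sum_i (c i : nat).
Definition weight n (c : {ffun 'I_t.+1 -> 'I_n.+1}) := \sum_(i < t.+1) i * (c i : nat).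
Definition max_len n := \max_(c in facts n) len c.
Definition max_facts n := [set c in facts n | len c == max_len n].

Lemma value_len_weight n (c : {ffun 'I_t.+1 -> 'I_n.+1}) :
  \sum_i (c i : nat) * g i = len c * e + d * weight c.
Proof.
rewrite /len /weight big_distrl big_distrr -big_split /=.
by apply: eq_bigr => i _; rewrite gE; nia.
Qed.

Lemma weight_le_len n (c : {ffun 'I_t.+1 -> 'I_n.+1}) : weight c <= t * len c.
Proof.
rewrite /weight /len big_distrr; apply: leq_sum => i _.
by rewrite leq_mul // -ltnS.
Qed.

Lemma len_ord_recl n (c : {ffun 'I_t.+1 -> 'I_n.+1}) :
  len c = c ord0 + \sum_(j < t) (c (lift ord0 j) : nat).
Proof. by rewrite /len big_ord_recl. Qed.

Lemma weight_ord_recl n (c : {ffun 'I_t.+1 -> 'I_n.+1}) :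
  weight c = \sum_(j < t) j.+1 * (c (lift ord0 j) : nat).
Proof. by rewrite /weight big_ord_recl. Qed.

Lemma exists_fact n L w : w <= t * L -> L <= n -> L * e + d * w = n ->
  exists2 c, c \in facts n & len c = L /\ weight c = w.
Proof.
move=> le_wL le_Ln value.
have [F [lenF wtF]] := exists_len_weight le_wL.
have leFn i : F i <= n by rewrite (leq_trans (leq_sum_term F i)) ?lenF.
have cE i : (inord_ffun n F i : nat) = F i by rewrite inord_ffunE.
have lenc : len (inord_ffun n F) = L.
  by rewrite -lenF; apply: eq_bigr => i _; rewrite cE.
have wtc : weight (inord_ffun n F) = w.
  by rewrite -wtF; apply: eq_bigr => i _; rewrite cE.
by exists (inord_ffun n F); rewrite ?inE ?value_len_weight lenc wtc ?value.
Qed.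

(* Otherwise trading [e] units of weight for [d] units of length,
   [L e + d w = (L + d) e + d (w - e)], gives a longer factorization. *)
Lemma weight_max_facts n c : c \in max_facts n -> weight c < e.
Proof.
rewrite inE => /andP[fact_c /eqP len_c].
have := fact_c; rewrite inE value_len_weight => /eqP value.
rewrite ltnNge; apply/negP => le_ew.
have le_wL := weight_le_len c.
have [c' fact_c' [len_c' _]] :=
  @exists_fact n (len c + d) (weight c - e) ltac:(nia) ltac:(nia) ltac:(nia).
have := leq_bigmax_cond (F := @len n) c' fact_c'.
by rewrite -/(max_len n) -len_c len_c'; lia.
Qed.

Let part1 : 'I_t := Ordinal t_gt0.

(* The parts [c_1, ..., c_t] form a partition of [weight c]; complete it to
   a partition of [e - 1] with parts equal to [1]. *)
Definition to_partition n (c : {ffun 'I_t.+1 -> 'I_n.+1}) : {ffun 'I_t -> 'I_e.-1.+1} :=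
  inord_ffun e.-1 (fun j => c (lift ord0 j) + (e.-1 - weight c) * (j == part1)).

Lemma to_partitionE n (c : {ffun 'I_t.+1 -> 'I_n.+1}) j : weight c < e ->
  (to_partition c j : nat) = c (lift ord0 j) + (e.-1 - weight c) * (j == part1).
Proof.
move=> lt_we; rewrite inord_ffunE // => k.
have : (c (lift ord0 k) : nat) <= weight c.
  by rewrite weight_ord_recl (leq_trans _ (leq_sum_term _ k)) // leq_pmull.
by case: (k == part1); rewrite ?muln1 ?muln0; lia.
Qed.

Lemma to_partition_in n (c : {ffun 'I_t.+1 -> 'I_n.+1}) :
  weight c < e -> to_partition c \in partitions e.-1 t.
Proof.
move=> lt_we; rewrite inE.
rewrite (eq_bigr (fun j : 'I_t => j.+1 * c (lift ord0 j) +
    (j.+1 * (e.-1 - weight c)) * (j == part1))) => [|j _]; last first.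
  by rewrite to_partitionE // mulnDr mulnA.
by rewrite big_split /= -weight_ord_recl sum_mul_indicator /= mul1n; apply/eqP; lia.
Qed.

(* All maximal factorizations of [n] share their length and their weight. *)
Lemma to_partition_inj n : {in max_facts n &, injective (@to_partition n)}.
Proof.
move=> c1 c2 max_c1 max_c2 same.
have lt_w1e := weight_max_facts max_c1; have lt_w2e := weight_max_facts max_c2.
move: max_c1 max_c2; rewrite !inE !value_len_weight.
move=> /andP[/eqP value1 /eqP len1] /andP[/eqP value2 /eqP len2].
have same_weight : weight c1 = weight c2 by nia.
have same_tail j : (c1 (lift ord0 j) : nat) = c2 (lift ord0 j).
  have := congr1 (fun m : {ffun 'I_t -> 'I_e.-1.+1} => (m j : nat)) same.
  by rewrite /= !to_partitionE // same_weight => /addIn.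
have same_head : (c1 ord0 : nat) = c2 ord0.
  have := len_ord_recl c2; rewrite len2 -len1 len_ord_recl.
  by rewrite (eq_bigr _ (fun j _ => same_tail j)) => /addIn.
apply/ffunP => i; apply/val_inj.
by case: (unliftP ord0 i) => [j ->|->]; [exact: same_tail | exact: same_head].
Qed.

Lemma card_max_facts_le n : #|max_facts n| <= #|partitions e.-1 t|.
Proof.
rewrite -(card_in_imset (@to_partition_inj n)); apply/subset_leq_card/subsetP.
by move=> _ /imsetP[c max_c ->]; apply/to_partition_in/weight_max_facts.
Qed.

Definition extremal := e.-1 * e + d * e.-1.

Lemma max_len_extremal : max_len extremal = e.-1.
Proof.
apply/eqP; rewrite eqn_leq; apply/andP; split.
  apply/bigmax_leqP => c; rewrite inE value_len_weight => /eqP.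
  exact: coprime_len_bound.
have [c fact_c [<- _]] :=
  @exists_fact extremal e.-1 e.-1 ltac:(nia) ltac:(rewrite /extremal; nia) erefl.
exact: leq_bigmax_cond.
Qed.

(* Reading [to_partition] backwards: [c_j] is the multiplicity of the part
   [j] for [j >= 1], and [c_0] pads the length up to [e - 1]. *)
Lemma to_partition_onto :
  partitions e.-1 t \subset @to_partition extremal @: max_facts extremal.
Proof.
apply/subsetP => m; rewrite inE => /eqP sum_m.
have le_m : \sum_(j < t) (m j : nat) <= e.-1.
  by rewrite -[leqRHS]sum_m leq_sum // => j _; rewrite leq_pmull.
pose F (i : 'I_t.+1) := if unlift ord0 i is Some j then (m j : nat)
                        else e.-1 - \sum_(j < t) (m j : nat).
have F_tail j : F (lift ord0 j) = m j by rewrite /F liftK.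
have F_head : F ord0 = e.-1 - \sum_(j < t) (m j : nat) by rewrite /F unlift_none.
have leF i : F i <= extremal.
  rewrite /extremal; case: (unliftP ord0 i) => [j ->|->];
    rewrite ?F_tail ?F_head; last nia.
  by rewrite (leq_trans (leq_trans (leq_sum_term (fun j => m j : nat) j) le_m)) //; nia.
pose c := inord_ffun extremal F.
have cE i : (c i : nat) = F i by rewrite inord_ffunE.
have tail_c : \sum_(j < t) (c (lift ord0 j) : nat) = \sum_(j < t) (m j : nat).
  by apply: eq_bigr => j _; rewrite cE F_tail.
have len_c : len c = e.-1 by rewrite len_ord_recl cE F_head tail_c subnK.
have weight_c : weight c = e.-1.
  by rewrite weight_ord_recl -sum_m; apply: eq_bigr => j _; rewrite cE F_tail.
apply/imsetP; exists c.
  by rewrite !inE value_len_weight len_c weight_c max_len_extremal !eqxx.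
apply/ffunP => j; apply/val_inj.
by rewrite /= to_partitionE weight_c ?subnn ?muln0 ?addn0 ?cE ?F_tail //; lia.
Qed.

Lemma card_max_facts_extremal : #|max_facts extremal| = #|partitions e.-1 t|.
Proof.
apply/eqP; rewrite eqn_leq card_max_facts_le /=.
by rewrite -(card_in_imset (@to_partition_inj _)) subset_leq_card // to_partition_onto.
Qed.

Lemma extremal_in_semigroup : exists c : 'I_t.+1 -> nat, \sum_i c i * g i = extremal.
Proof.
have [c fact_c _] :=
  @exists_fact extremal e.-1 e.-1 ltac:(nia) ltac:(rewrite /extremal; nia) erefl.
by exists (fun i => c i : nat); move: fact_c; rewrite inE => /eqP.
Qed.

End ArithmeticGenerators.

Lemma size_arith_gens e d t : size (arith_gens e d t) = t.+1.
Proof. by rewrite size_map size_iota. Qed.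

Lemma nth_arith_gens e d t i : i < t.+1 -> nth 0 (arith_gens e d t) i = e + i * d.
Proof. by move=> lt_it; rewrite (nth_map 0) ?size_iota ?nth_iota. Qed.

Theorem proposition4p14 (e d t : nat) :
  0 < e -> 0 < d -> 0 < t -> gcdn e d = 1 ->
  numerical (arith_gens e d t) ->
  minimal_gens (arith_gens e d t) ->
  dmax_is (arith_gens e d t) (num_partitions_parts_le e.-1 t).
Proof.
move=> e_gt0 d_gt0 t_gt0 /eqP co_ed _ _.
have gE := @nth_arith_gens e d t.
rewrite /dmax_is /dmax_n /ord /factorizations /flength /in_semigroup.
move: (nth 0 _) gE => g gE.
move: (size _) (size_arith_gens e d t) => _ ->.
have {}gE (i : 'I_t.+1) : g i = e + i * d by exact: gE.
split; last by move=> n _; exact: card_max_facts_le gE n.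
exists (extremal e d); split; first exact: extremal_in_semigroup gE.
exact: card_max_facts_extremal.
Qed.
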